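(* Let $\mathcal G=(G,\pi_G,c_G)\in\mathrm{LiftPMod}(\mathbb B,\mathcal C)$ with $G=(V_G,E_G)$ and $w_G\in\mathrm{Param}(\mathcal G)$; let $\mathcal H=(H,\pi_H,c_H)\in\mathrm{LiftPMod}(\mathbb B,\mathcal C)$ and $w_H\in\mathrm{Param}(\mathcal H)$; let $\mathcal X\subseteq\prod_{u\in\mathcal C}\mathcal Y_{p_{\mathcal C}(u)}$. Let $\eta\in\mathbb R_+$ and suppose $\varphi:\mathcal G\to\mathcal H$ is a morphism of lifted perceptrons such that $\|(w_G)_e-(w_H)_{\varphi(e)}\|\le\eta$ for all $e\in E_G$. Then for every $v\in V_G$, $\sup_{x\in\mathcal X}\|[\mathcal F_{\mathcal G}(w_G,x)]_v-[\mathcal F_{\mathcal H}(w_H,x)]_{\varphi(v)}\|\le L[\mathcal H,w_H](\eta,\mathcal X)$.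
   Context: Graphs: $G=(V,E)$, $V$ finite, $E\subseteq V\times V$; $G(-,v)=\{u:(u,v)\in E\}$. A homomorphism maps vertices preserving edges, acting on edges by $\varphi(u,v)=(\varphi(u),\varphi(v))$. A fibration is a homomorphism restricting to bijections $G(-,v)\to H(-,\varphi(v))$ for all $v$. A perceptron module over a finite DAG $B=(V_B,E_B)$ is $\mathbb B=((I_B,T_B),(\mathcal Y,\mathcal Z,\mathcal W),(M,\sigma))$: $I_B\subseteq V_B$ (vertices without parents), $T_B\subseteq V_B$, families of finite-dimensional real inner product spaces $\mathcal Y_v$ ($v\in V_B$), $\mathcal Z_e,\mathcal W_e$ ($e\in E_B$), maps $M_{(u,v)}:\mathcal W_{(u,v)}\times\mathcal Y_u\to\mathcal Z_{(u,v)}$ and $\sigma_v:\prod_{u\in B(-,v)}\mathcal Z_{(u,v)}\to\mathcal Y_v$ ($v\notin I_B$). Fix such $\mathbb B$, a finite set $\mathcal C$, $p_{\mathcal C}:\mathcal C\to I_B$. $\mathrm{LiftPMod}(\mathbb B,\mathcal C)$: triples $(G,\pi,c)$, $\pi:G\to B$ homomorphism, $c:\pi^{-1}(I_B)\to\mathcal C$ injective with $p_{\mathcal C}\circ c=\pi$ there. $\mathrm{Param}(\mathcal G)=\prod_{e\in E_G}\mathcal W_{\pi(e)}$. Forward function $\mathcal F_{\mathcal G}(w,x)=f$: $f_v=x_{c(v)}$ if $\pi(v)\in I_B$, else $f_v=F_v(w,f)$ where $F_v(w,g)=\sigma_{\pi(v)}((\sum_{u\in G(-,v)\cap\pi^{-1}(a)}M_{\pi(u,v)}(w_{(u,v)},g_u))_{a\in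 B(-,\pi(v))})$ (depends only on $w_{(u,v)},g_u$ for $u\in G(-,v)$). A morphism of lifted perceptrons $\varphi:(G,\pi_G,c_G)\to(H,\pi_H,c_H)$ is a fibration with $\pi_G=\pi_H\circ\varphi$ and $c_G=c_H\circ\varphi$. Quantitative continuity constant: for $\mathcal H=(H,\pi_H,c_H)$, $w^0\in\mathrm{Param}(\mathcal H)$, $\eta\ge0$, $x\in\mathcal X$, let $g^0=\mathcal F_{\mathcal H}(w^0,x)$; set $[L(\eta,x)]_v=0$ if $\pi_H(v)\in I_B$, and inductively otherwise $[L(\eta,x)]_v=\sup\|F_v(w,g)-F_v(w^0,g^0)\|$ over all $(w_{(u,v)},g_u)_{u\in H(-,v)}$ with $\|w_{(u,v)}-w^0_{(u,v)}\|\le\eta$ and $\|g_u-g^0_u\|\le[L(\eta,x)]_u$ ($F_v$ computed in $\mathcal H$). Then $L[\mathcal H,w^0](\eta,\mathcal X)=\sup_{x\in\mathcal X}\max_{v\in V_H}[L(\eta,x)]_v\in[0,+\infty]$. *)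

From HB Require Import structures.
From mathcomp Require Import all_boot all_order all_algebra.
From mathcomp Require Import boolp classical_sets reals constructive_ereal ereal.
Set Implicit Arguments. Unset Strict Implicit. Unset Printing Implicit Defensive.
Import Order.TTheory GRing.Theory Num.Theory.
Local Open Scope ring_scope.

Section Defs.
Variable R : realType.

(* Finite-dimensional real inner product spaces are modelled as 'rV[R]_n with the
   standard (Euclidean) inner product; this is its norm. *)
Definition enorm n (y : 'rV[R]_n) : R := Num.sqrt (\sum_i y 0 i ^+ 2).

(* Transport of a vector along an equality of indices (0 if the indices differ;
   only ever used where they are provably equal). *)
Definition tr (T : eqType) (d : T -> nat) (a b : T) (y : 'rV[R]_(d a)) : 'rV[R]_(d b) :=
  match a =P b with
  | ReflectT e => eq_rect a (fun z => 'rV[R]_(d z)) y b e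
  | ReflectF _ => 0
  end.
Arguments tr [T] d a b y.

(* Perceptron module over a finite DAG B = (VB, EB). Spaces indexed by edges
   are indexed by pairs of vertices (only values on edges are ever used). *)
Record pmod (VB : finType) := PMod {
  EB : rel VB;
  IB : {set VB};
  TB : {set VB};
  dY : VB -> nat;
  dZ : VB * VB -> nat;
  dW : VB * VB -> nat;
  Mm : forall e : VB * VB, 'rV[R]_(dW e) -> 'rV[R]_(dY e.1) -> 'rV[R]_(dZ e);
  sig : forall v : VB, (forall a : VB, 'rV[R]_(dZ (a, v))) -> 'rV[R]_(dY v);
  EB_acyclic : forall u v, EB u v -> ~~ connect EB v u;
  IB_roots : forall v, v \in IB -> forall u, ~~ EB u v
}.

Section Lift.
Variables (VB : finType) (B : pmod VB) (C : finType) (pC : C -> VB).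

(* (G, pi, c) in LiftPMod(B, C): pi homomorphism, c defined (and injective,
   compatible with pC) on pi^{-1}(I_B); values of c elsewhere are irrelevant. *)
Definition is_lifted (VG : finType) (EG : rel VG) (pi : VG -> VB) (c : VG -> C) : Prop :=
  [/\ forall u v, EG u v -> EB B (pi u) (pi v),
      {in [pred v | pi v \in IB B] &, injective c} &
      forall v, pi v \in IB B -> pC (c v) = pi v].

Definition param (VG : finType) (pi : VG -> VB) :=
  forall e : VG * VG, 'rV[R]_(dW B (pi e.1, pi e.2)).
Definition inputs := forall a : C, 'rV[R]_(dY B (pC a)).
Definition state (VG : finType) (pi : VG -> VB) := forall v : VG, 'rV[R]_(dY B (pi v)).

Arguments sig [VB] p v.
Arguments Mm [VB] p e.
Definition Fv (VG : finType) (EG : rel VG) (pi : VG -> VB) (w : param pi) (g : state pi)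
  (v : VG) : 'rV[R]_(dY B (pi v)) :=
  sig B (pi v) (fun a => \sum_(u | EG u v && (pi u == a))
     tr (dZ B) (pi u, pi v) (a, pi v) (Mm B (pi u, pi v) (w (u, v)) (g u))).

Definition fstep (VG : finType) (EG : rel VG) (pi : VG -> VB) (c : VG -> C)
  (w : param pi) (x : inputs) (f : state pi) : state pi := fun v =>
  if pi v \in IB B then tr (dY B) (pC (c v)) (pi v) (x (c v)) else Fv EG w f v.

(* The forward function: the inductive (on the DAG G) definition, realised by
   iterating the defining equations #|V_G| times (depth of G < #|V_G|). *)
Definition forward (VG : finType) (EG : rel VG) (pi : VG -> VB) (c : VG -> C)
  (w : param pi) (x : inputs) : state pi :=
  iter #|VG| (fstep EG c w x) (fun v => 0).

Definition Lstep (VH : finType) (EH : rel VH) (pi : VH -> VB) (w0 : param pi)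
  (g0 : state pi) (eta : R) (Lp : VH -> \bar R) (v : VH) : \bar R :=
  if pi v \in IB B then 0%E else
  ereal_sup [set z | exists (w : param pi) (g : state pi),
     (forall u, EH u v ->
        enorm (w (u, v) - w0 (u, v)) <= eta /\ ((enorm (g u - g0 u))%:E <= Lp u)%E)
     /\ z = (enorm (Fv EH w g v - Fv EH w0 g0 v))%:E].

Definition Lvert (VH : finType) (EH : rel VH) (pi : VH -> VB) (c : VH -> C)
  (w0 : param pi) (eta : R) (x : inputs) : VH -> \bar R :=
  iter #|VH| (Lstep EH w0 (forward EH c w0 x) eta) (fun _ => 0%E).

Definition Lconst (VH : finType) (EH : rel VH) (pi : VH -> VB) (c : VH -> C)
  (w0 : param pi) (eta : R) (X : set inputs) : \bar R :=
  ereal_sup [set z | exists x v, X x /\ z = Lvert EH c w0 eta x v].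

Definition is_fibration (VG VH : finType) (EG : rel VG) (EH : rel VH) (phi : VG -> VH) : Prop :=
  (forall u v, EG u v -> EH (phi u) (phi v)) /\
  (forall v, {in [pred u | EG u v] &, injective phi} /\
             (forall u', EH u' (phi v) -> exists2 u, EG u v & phi u = u')).

Definition lifted_morph (VG VH : finType) (EG : rel VG) (EH : rel VH)
  (piG : VG -> VB) (piH : VH -> VB) (cG : VG -> C) (cH : VH -> C) (phi : VG -> VH) : Prop :=
  [/\ is_fibration EG EH phi,
      forall v, piG v = piH (phi v) &
      forall v, piG v \in IB B -> cG v = cH (phi v)].

End Lift.
End Defs.
Arguments tr [R T] d a b y.
Arguments sig [R VB] p v.
Arguments Mm [R VB] p e.

From HB Require Import structures.
From mathcomp Require Import all_boot all_order all_algebra.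
From mathcomp Require Import boolp classical_sets reals constructive_ereal ereal.
Set Implicit Arguments. Unset Strict Implicit. Unset Printing Implicit Defensive.
Import Order.TTheory GRing.Theory Num.Theory.

(* A fibration maps the parents of v in G bijectively onto the parents of phi v in H, so
   F_v evaluated in G equals F_(phi v) evaluated in H at the weights and values transported
   from G.  Those transported arguments lie within eta of w_H and, by induction along the DAG G,
   within [L(eta,x)]_(phi u) of the reference values of H, so they are admissible in the
   supremum that defines [L(eta,x)]_(phi v).  At input vertices both networks read the same
   coordinate of x. *)

Section AcyclicGraph.
Variables (V : finType) (E : rel V).

Definition acyclic := forall u v, E u v -> ~~ connect E v u.

Definition sancestors v := [set u | connect E u v & u != v].

Hypothesis E_acyclic : acyclic.

Lemma card_sancestors_edge u v : E u v -> #|sancestors u| < #|sancestors v|.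
Proof.
move=> Euv; have nvu := E_acyclic Euv.
apply: proper_card; apply/properP; split.
  apply/fintype.subsetP => w; rewrite !inE => /andP[cwu _]; apply/andP; split.
    exact: connect_trans cwu (connect1 Euv).
  by apply: contraNneq nvu => ewv; rewrite -ewv.
exists u; rewrite !inE ?eqxx ?andbF // connect1 //=.
by apply: contraNneq nvu => ->; rewrite connect0.
Qed.

Lemma card_sancestors_lt v : #|sancestors v| < #|V|.
Proof.
apply: (@leq_ltn_trans #|[set~ v]|).
  by apply/subset_leq_card/fintype.subsetP => u; rewrite !inE => /andP[].
by rewrite cardsC1 ltn_predL; apply/card_gt0P; exists v.
Qed.

Lemma acyclic_ind (P : V -> Prop) :
  (forall v, (forall u, E u v -> P u) -> P v) -> forall v, P v.
Proof.
move=> IH v; have [n] := ubnP #|sancestors v|; elim: n v => // n IHn v lt_v.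
apply: IH => u Euv; apply: IHn.
exact: leq_trans (card_sancestors_edge Euv) _.
Qed.

Section LocalIteration.
Variables (T : V -> Type) (F : (forall v, T v) -> forall v, T v).
Hypothesis F_local : forall f g v, (forall u, E u v -> f u = g u) -> F f v = F g v.

Lemma iter_local_stable x k v : #|sancestors v| < k -> iter k.+1 F x v = iter k F x v.
Proof.
elim: k v => // k IHk v lt_v; apply: F_local => u Euv; apply: IHk.
exact: leq_trans (card_sancestors_edge Euv) lt_v.
Qed.

Lemma iter_card_fixpoint x v : F (iter #|V| F x) v = iter #|V| F x v.
Proof. exact/iter_local_stable/card_sancestors_lt. Qed.

End LocalIteration.
End AcyclicGraph.

Lemma connect_hom (V W : finType) (E : rel V) (E' : rel W) (f : V -> W) :
  (forall u v, E u v -> E' (f u) (f v)) -> forall a b, connect E a b -> connect E' (f a) (f b).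
Proof.
move=> f_hom a b /connectP[p Ep ->]; elim: p a Ep => [|y p IHp] a /=.
  by move=> _; exact: connect0.
by case/andP=> /f_hom Eay /IHp; apply: connect_trans (connect1 Eay).
Qed.

Lemma acyclic_hom (V W : finType) (E : rel V) (E' : rel W) (f : V -> W) :
  (forall u v, E u v -> E' (f u) (f v)) -> acyclic E' -> acyclic E.
Proof.
move=> f_hom E'_acyclic u v Euv; apply: contraNN (E'_acyclic _ _ (f_hom _ _ Euv)).
exact: connect_hom.
Qed.

Lemma dfun_extend_in (I : finType) (A : eqType) (P : pred I) (h : I -> A)
    (T : A -> Type) (d : forall a, T a) (f : forall i, T (h i)) :
  {in P &, injective h} -> exists g : forall a, T a, forall i, P i -> g (h i) = f i.
Proof.
move=> h_inj.
exists (fun a => if [pick i | P i && (h i == a)] is Some i then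
          if h i =P a is ReflectT e then eq_rect _ T (f i) _ e else d a
        else d a).
move=> i Pi; case: pickP => [j /andP[Pj /eqP hji] | /(_ i)]; last by rewrite Pi eqxx.
have {hji} <- := h_inj _ _ Pj Pi hji.
by case: eqP => // e; rewrite (eq_irrelevance e erefl).
Qed.

Local Open Scope ring_scope.

Lemma tr_id (R : realType) (T : eqType) (d : T -> nat) a (y : 'rV[R]_(d a)) : tr d a a y = y.
Proof. by rewrite /tr; case: eqP => // e; rewrite (eq_irrelevance e erefl). Qed.

Lemma enorm0 (R : realType) n : enorm (0 : 'rV[R]_n) = 0.
Proof. by rewrite /enorm big1 ?sqrtr0 // => i _; rewrite mxE expr0n. Qed.

Section Perceptron.
Variables (R : realType) (VB : finType) (B : pmod R VB) (C : finType) (pC : C -> VB).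

Section Locality.
Variables (V : finType) (E : rel V) (pi : V -> VB) (c : V -> C).

Lemma Fv_local (w : param B pi) (g g' : state B pi) v :
  (forall u, E u v -> g u = g' u) -> Fv E w g v = Fv E w g' v.
Proof.
move=> eq_g; congr (sig B _ _); apply: functional_extensionality_dep => a.
by apply: eq_bigr => u /andP[/eq_g ->].
Qed.

Lemma fstep_local (w : param B pi) (x : inputs B pC) (f f' : state B pi) v :
  (forall u, E u v -> f u = f' u) -> fstep E c w x f v = fstep E c w x f' v.
Proof. by move=> eq_f; rewrite /fstep (Fv_local _ eq_f). Qed.

Lemma Lstep_local (w0 : param B pi) (g0 : state B pi) eta (Lp Lp' : V -> \bar R) v :
  (forall u, E u v -> Lp u = Lp' u) -> Lstep E w0 g0 eta Lp v = Lstep E w0 g0 eta Lp' v.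
Proof.
move=> eq_L; rewrite /Lstep; case: ifP => // _; congr ereal_sup.
by apply/seteqP; split=> z [w [g [near_w0g0 ->]]]; exists w, g; split=> // u Euv;
  have [? ?] := near_w0g0 u Euv; rewrite ?eq_L // -eq_L.
Qed.

Hypothesis E_acyclic : acyclic E.

Lemma forward_fixpoint (w : param B pi) (x : inputs B pC) v :
  fstep E c w x (forward E c w x) v = forward E c w x v.
Proof. exact/(iter_card_fixpoint E_acyclic)/fstep_local. Qed.

Lemma Lvert_fixpoint (w0 : param B pi) eta (x : inputs B pC) v :
  Lstep E w0 (forward E c w0 x) eta (Lvert E c w0 eta x) v = Lvert E c w0 eta x v.
Proof. exact/(iter_card_fixpoint (T := fun=> \bar R) E_acyclic)/Lstep_local. Qed.

End Locality.

Section Fibration.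
Variables (VG VH : finType) (EG : rel VG) (EH : rel VH) (phi : VG -> VH) (piH : VH -> VB).
Hypothesis phi_fib : is_fibration EG EH phi.
Local Notation piG := (fun u => piH (phi u)).

Lemma sum_parents_fibration (M : nmodType) (Q : pred VH) (F : VH -> M) v :
  \sum_(u' | EH u' (phi v) && Q u') F u' = \sum_(u | EG u v && Q (phi u)) F (phi u).
Proof.
have [phi_hom /(_ v)[phi_inj phi_onto]] := phi_fib.
rewrite -(big_imset _ (h := phi) (A := [pred u | EG u v && Q (phi u)])); last first.
  by move=> u1 u2 /andP[Eu1 _] /andP[Eu2 _]; apply: phi_inj.
apply: eq_bigl => u'; apply/andP/imsetP => [[/phi_onto[u Euv <-] Qu'] | [u /andP[Euv Qu] ->]].
  by exists u; rewrite // inE Euv.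
by rewrite phi_hom.
Qed.

Lemma Fv_fibration (wG : param B piG) (gG : state B piG) (w : param B piH) (g : state B piH) v :
  (forall u, EG u v -> w (phi u, phi v) = wG (u, v)) ->
  (forall u, EG u v -> g (phi u) = gG u) ->
  Fv EG wG gG v = Fv EH w g (phi v).
Proof.
move=> eq_w eq_g; congr (sig B _ _); apply: functional_extensionality_dep => a.
rewrite sum_parents_fibration; apply: eq_bigr => u /andP[Euv _].
by rewrite eq_w ?eq_g.
Qed.

Lemma Lstep_fibration (w0 : param B piH) (g0 : state B piH) eta (Lp : VH -> \bar R)
    (wG : param B piG) (gG : state B piG) v :
  piH (phi v) \notin IB B ->
  (forall u, EG u v -> enorm (wG (u, v) - w0 (phi u, phi v)) <= eta
                       /\ ((enorm (gG u - g0 (phi u)))%:E <= Lp (phi u))%E) ->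
  ((enorm (Fv EG wG gG v - Fv EH w0 g0 (phi v)))%:E <= Lstep EH w0 g0 eta Lp (phi v))%E.
Proof.
move=> not_input near_w0g0; rewrite /Lstep (negbTE not_input).
have [_ /(_ v)[phi_inj phi_onto]] := phi_fib.
have edge_inj : {in [pred u | EG u v] &, injective (fun u => (phi u, phi v))}.
  by move=> u1 u2 Eu1 Eu2 [/phi_inj]; apply.
have [w eq_w] := @dfun_extend_in _ _ _ (fun u => (phi u, phi v))
  (fun e => 'rV_(dW B (piH e.1, piH e.2))) w0 (fun u => wG (u, v)) edge_inj.
have [g eq_g] := @dfun_extend_in _ _ [pred u | EG u v] phi _ g0 gG phi_inj.
apply: ereal_sup_ubound; exists w, g; split; last by rewrite (Fv_fibration eq_w eq_g).
by move=> u' /phi_onto[u Euv <-]; rewrite eq_w // eq_g //; apply: near_w0g0.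
Qed.

Variables (cG : VG -> C) (cH : VH -> C).
Hypothesis c_phi : forall v, piH (phi v) \in IB B -> cG v = cH (phi v).
Hypotheses (EG_acyclic : acyclic EG) (EH_acyclic : acyclic EH).

Lemma forward_fibration_le_Lvert (wG : param B piG) (wH : param B piH) eta (x : inputs B pC) :
  (forall u v, EG u v -> enorm (wG (u, v) - wH (phi u, phi v)) <= eta) ->
  forall v, ((enorm (forward EG cG wG x v - forward EH cH wH x (phi v)))%:E
             <= Lvert EH cH wH eta x (phi v))%E.
Proof.
move=> near_wH; apply: (acyclic_ind EG_acyclic) => v IHv.
rewrite -(forward_fixpoint cG EG_acyclic wG x v) -(forward_fixpoint cH EH_acyclic wH x (phi v)).
rewrite -(Lvert_fixpoint cH EH_acyclic wH eta x (phi v)) /fstep /=.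
case: ifP => input.
  by rewrite c_phi // subrr enorm0 /Lstep input.
apply: Lstep_fibration; first by rewrite input.
by move=> u Euv; split; [apply: near_wH | apply: IHv].
Qed.

End Fibration.
End Perceptron.

Theorem proposition4 (R : realType) (VB : finType) (B : pmod R VB)
  (C : finType) (pC : C -> VB)
  (VG : finType) (EG : rel VG) (piG : VG -> VB) (cG : VG -> C)
  (HG : is_lifted B pC EG piG cG) (wG : param B piG)
  (VH : finType) (EH : rel VH) (piH : VH -> VB) (cH : VH -> C)
  (HH : is_lifted B pC EH piH cH) (wH : param B piH)
  (X : set (inputs B pC)) (eta : R) (Heta : 0 <= eta) (phi : VG -> VH)
  (Hphi : lifted_morph B EG EH piG piH cG cH phi)
  (Hw : forall u v, EG u v ->
     enorm (wG (u, v) - tr (dW B) (piH (phi u), piH (phi v)) (piG u, piG v) (wH (phi u, phi v)))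
       <= eta) :
  forall v : VG,
    (ereal_sup [set (enorm (forward EG cG wG x v
                   - tr (dY B) (piH (phi v)) (piG v) (forward EH cH wH x (phi v))))%:E
                | x in X]
     <= Lconst EH cH wH eta X)%E.
Proof.
case: Hphi => phi_fib piG_phi c_phi.
(* Replacing piG by piH \o phi makes the weight and value types of G and H agree definitionally. *)
have piGE : piG = (fun u => piH (phi u)) := funext piG_phi; subst piG.
case: HG => G_hom _ _; case: HH => H_hom _ _.
have EG_acyclic := acyclic_hom G_hom (@EB_acyclic _ _ B).
have EH_acyclic := acyclic_hom H_hom (@EB_acyclic _ _ B).
have near_wH u v : EG u v -> enorm (wG (u, v) - wH (phi u, phi v)) <= eta.
  by move=> Euv; have := Hw u v Euv; rewrite tr_id.
move=> v; apply: ge_ereal_sup => _ [x Xx <-]; rewrite tr_id.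
apply: le_trans (forward_fibration_le_Lvert phi_fib c_phi EG_acyclic EH_acyclic x near_wH v) _.
by apply: ereal_sup_ubound; exists x, (phi v).
Qed.
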